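(* Let $q\ge1$ be an integer. Suppose there are constants $\varepsilon,\delta>0$ and a Borel set $K\subset[0,1)$ such that: (i) $e(q,x;\varepsilon,\delta)=1$ for $x\in K$ and $e(q,x;\varepsilon,\delta)\le2$ for $x\in[0,1)\setminus K$; (ii) if $(\mathbf{u},\mathbf{v})\in E(q,x;\varepsilon,\delta)$ for some $x\in[0,1)\setminus K$ with $\mathbf{u}\ne\mathbf{v}$, then both $x(\mathbf{u})\in K$ and $x(\mathbf{v})\in K$. Then $\sigma(q)\le\sqrt2$.
   Context: Standing setup: $b\ge2$ integer, $\mathcal{A}=\{0,\dots,b-1\}$, $\gamma\in(1/b,1)$, $\psi$ a $\mathbb{Z}$-periodic $C^1$ function. $S(x,\mathbf{i})=\sum_{n\ge1}\gamma^{n-1}\psi\big(\frac{x+i_1+i_2b+\cdots+i_nb^{n-1}}{b^n}\big)$, $S'=\partial_xS$. For $\mathbf{u}\in\mathcal{A}^q$, $x(\mathbf{u})=(x+u_1+u_2b+\cdots+u_qb^{q-1})/b^q$. Sequences $\mathbf{i},\mathbf{j}$ are $(\varepsilon,\delta)$-tangent at $x_0$ if $|S(x_0,\mathbf{i})-S(x_0,\mathbf{j})|\le\varepsilon$ and $|S'(x_0,\mathbf{i})-S'(x_0,\mathbf{j})|\le\delta$. $E(q,x_0;\varepsilon,\delta)$: pairs $(\mathbf{k},\mathbf{l})\in\mathcal{A}^q\times\mathcal{A}^q$ such that some concatenations $\mathbf{ku},\mathbf{lv}$ are $(\varepsilon,\delta)$-tangent at $x_0$; $e(q,x_0;\varepsilon,\delta)=\max_{\mathbf{k}}\#\{\mathbf{l}:(\mathbf{k},\mathbf{l})\in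 E(q,x_0;\varepsilon,\delta)\}$. Weight function: measurable $\omega:[0,1)\to(0,\infty)$ with $\omega,1/\omega$ bounded. Admissible testing function of order $q$: measurable $V:[0,1)\times\mathcal{A}^q\times\mathcal{A}^q\to[0,\infty)$ such that for some $\varepsilon,\delta>0$, $V(x,\mathbf{u},\mathbf{v})V(x,\mathbf{v},\mathbf{u})\ge1$ whenever $x\in[0,1)$ and $(\mathbf{u},\mathbf{v})\in E(q,x;\varepsilon,\delta)$. $\Sigma_{V,\omega}(x)=\sup_{\mathbf{u}}\frac{\omega(x)}{\omega(x(\mathbf{u}))}\sum_{\mathbf{v}}V(x,\mathbf{u},\mathbf{v})$; $\sigma(q)=\inf_{\omega,V}\|\Sigma_{V,\omega}\|_\infty$. *)

From Stdlib Require Import Reals Lra Lia List Classical ClassicalEpsilon.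
Import ListNotations.
Open Scope R_scope.

(** Digit sequences i = (i_1, i_2, ...) are functions [i : nat -> nat] with
    [i 0 = i_1], [i 1 = i_2], ...; they lie in A^N iff [forall n, (i n < b)%nat].
    Finite words u = (u_1,...,u_q) in A^q are lists [[u_1; ...; u_q]]. *)

Definition digits (b : nat) (i : nat -> nat) : Prop := forall n, (i n < b)%nat.

Fixpoint words (b q : nat) : list (list nat) :=
  match q with
  | O => [ [] ]
  | S q' => flat_map (fun d => map (cons d) (words b q')) (seq 0 b)
  end.

Fixpoint digval (b : nat) (i : nat -> nat) (n : nat) : R :=
  match n with
  | O => 0
  | S m => digval b i m + INR (i m) * INR b ^ m
  end.

(** n-th term (0-indexed, n = N-1) of the series defining S(x,i):
    gamma^(N-1) psi((x + i_1 + ... + i_N b^(N-1)) / b^N) *)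
Definition Sterm (b : nat) (gamma : R) (psi : R -> R) (x : R) (i : nat -> nat)
  (n : nat) : R :=
  gamma ^ n * psi ((x + digval b i (S n)) / INR b ^ (S n)).

Definition S (b : nat) (gamma : R) (psi : R -> R) (x : R) (i : nat -> nat) : R :=
  epsilon (inhabits 0) (fun s => infinite_sum (Sterm b gamma psi x i) s).

Definition S' (b : nat) (gamma : R) (psi : R -> R) (x : R) (i : nat -> nat) : R :=
  epsilon (inhabits 0)
    (fun d => derivable_pt_lim (fun y => S b gamma psi y i) x d).

Definition tangent (b : nat) (gamma : R) (psi : R -> R)
  (eps delta x0 : R) (i j : nat -> nat) : Prop :=
  Rabs (S b gamma psi x0 i - S b gamma psi x0 j) <= eps /\
  Rabs (S' b gamma psi x0 i - S' b gamma psi x0 j) <= delta.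

Definition concat (k : list nat) (u : nat -> nat) : nat -> nat :=
  fun n => if Nat.ltb n (length k) then nth n k O else u (n - length k)%nat.

Fixpoint wordval (b : nat) (u : list nat) : R :=
  match u with
  | [] => 0
  | d :: u' => INR d + INR b * wordval b u'
  end.

Definition xw (b : nat) (x : R) (u : list nat) : R :=
  (x + wordval b u) / INR b ^ length u.

Definition inE (b : nat) (gamma : R) (psi : R -> R) (q : nat) (x0 eps delta : R)
  (k l : list nat) : Prop :=
  In k (words b q) /\ In l (words b q) /\
  exists u v : nat -> nat, digits b u /\ digits b v /\
    tangent b gamma psi eps delta x0 (concat k u) (concat l v).

Definition bool_of (P : Prop) : bool :=
  if excluded_middle_informative P then true else false.

Definition e (b : nat) (gamma : R) (psi : R -> R) (q : nat) (x0 eps delta : R) : nat :=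
  fold_right Nat.max O
    (map (fun k => length (filter (fun l => bool_of (inE b gamma psi q x0 eps delta k l))
                                  (words b q)))
         (words b q)).

Inductive borel : (R -> Prop) -> Prop :=
  | borel_interval : forall a c : R, borel (fun x => a < x < c)
  | borel_compl : forall A, borel A -> borel (fun x => ~ A x)
  | borel_union : forall A : nat -> R -> Prop,
      (forall n, borel (A n)) -> borel (fun x => exists n, A n x)
  | borel_ext : forall A B, (forall x, A x <-> B x) -> borel A -> borel B.

Definition measurable01 (f : R -> R) : Prop :=
  forall B, borel B -> borel (fun x => 0 <= x < 1 /\ B (f x)).

Definition null_set (P : R -> Prop) : Prop :=
  forall eta, 0 < eta ->
    exists a c : nat -> R,
      (forall n, a n <= c n) /\
      (forall x, P x -> exists n, a n < x < c n) /\
      (forall N, sum_f_R0 (fun n => c n - a n) N <= eta).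

Definition esssup_le (f : R -> R) (M : R) : Prop :=
  null_set (fun x => 0 <= x < 1 /\ M < f x).

Definition weight (w : R -> R) : Prop :=
  measurable01 w /\
  (forall x, 0 <= x < 1 -> 0 < w x) /\
  (exists M, forall x, 0 <= x < 1 -> w x <= M /\ 1 / w x <= M).

Definition admissible (b : nat) (gamma : R) (psi : R -> R) (q : nat)
  (V : R -> list nat -> list nat -> R) : Prop :=
  (forall u v, In u (words b q) -> In v (words b q) -> measurable01 (fun x => V x u v)) /\
  (forall x u v, 0 <= x < 1 -> In u (words b q) -> In v (words b q) -> 0 <= V x u v) /\
  (exists eps delta, 0 < eps /\ 0 < delta /\
     forall x u v, 0 <= x < 1 -> inE b gamma psi q x eps delta u v ->
       1 <= V x u v * V x v u).

Definition Sigma (b q : nat) (V : R -> list nat -> list nat -> R) (w : R -> R)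
  (x : R) : R :=
  fold_right Rmax 0
    (map (fun u => w x / w (xw b x u) *
                   fold_right Rplus 0 (map (fun v => V x u v) (words b q)))
         (words b q)).

(** sigma(q) <= c, where sigma(q) = inf_{omega,V} ||Sigma_{V,omega}||_oo *)
Definition sigma_le (b : nat) (gamma : R) (psi : R -> R) (q : nat) (c : R) : Prop :=
  forall eta, 0 < eta ->
    exists w V, weight w /\ admissible b gamma psi q V /\
      esssup_le (Sigma b q V w) (c + eta).

(* Take the weight omega = sqrt 2 on K and 1 off K, and V(x,u,v) = 1 if u = v or if (u,v) is
   tangent at x, 0 otherwise, so that V(x,u,v) V(x,v,u) >= 1 on E.  At x in K each u has a
   single partner and omega(x)/omega(x(u)) <= sqrt 2.  Off K, either x(u) is in K and the at
   most two partners are divided by sqrt 2, or x(u) is not in K and, by (ii), u is its own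
   only partner.  For V to be measurable, tangency is replaced by a countable union of
   intervals squeezed between tangency at two scales; this is possible because S and S' are
   equicontinuous in x, uniformly in the digit sequence. *)

From Pilot Require Import Defs.
From Stdlib Require Import ZArith Reals Ranalysis5 Lra Lia List.
From Stdlib Require Import Classical ClassicalEpsilon FunctionalExtensionality.
Open Scope R_scope.

Lemma geometric_series_cv (g C : R) : 0 < g < 1 ->
  Un_cv (sum_f_R0 (fun n => C * g ^ n)) (C / (1 - g)).
Proof.
  intros Hg.
  assert (Hgeo := GP_infinite g ltac:(rewrite Rabs_right; lra)).
  assert (Hcst : Un_cv (fun _ : nat => C) C).
  { intros e He; exists O; intros; unfold Rdist; rewrite Rminus_diag, Rabs_R0; lra. }
  apply (Un_cv_ext (fun n => C * sum_f_R0 (fun k => 1 * g ^ k) n)).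
  - intros n; rewrite scal_sum; apply sum_eq; intros; ring.
  - unfold Rdiv; exact (CV_mult _ _ _ _ Hcst Hgeo).
Qed.

Lemma CVN_r_geometric (g C : R) (fn : nat -> R -> R) (r : posreal) : 0 < g < 1 ->
  (forall n x, Rabs (fn n x) <= C * g ^ n) -> CVN_r fn r.
Proof.
  intros Hg Hfn.
  assert (HC : 0 <= C) by (specialize (Hfn O 0); simpl in Hfn;
    pose proof (Rabs_pos (fn O 0)); lra).
  exists (fun n => C * g ^ n), (C / (1 - g)). split.
  - apply (Un_cv_ext (sum_f_R0 (fun n => C * g ^ n))); [|exact (geometric_series_cv g C Hg)].
    intros n; apply sum_eq; intros k _; rewrite Rabs_right; [reflexivity|].
    apply Rle_ge, Rmult_le_pos; [lra | apply pow_le; lra].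
  - intros; apply Hfn.
Qed.

Lemma series_le_geometric (g C l : R) (a : nat -> R) : 0 < g < 1 ->
  (forall n, Rabs (a n) <= C * g ^ n) -> Un_cv (sum_f_R0 a) l -> Rabs l <= C / (1 - g).
Proof.
  intros Hg Ha Hl.
  exact (sum_cv_maj _ (fun n _ => a n) 0 l _ Hl (geometric_series_cv g C Hg) (fun n => Ha n)).
Qed.

Lemma series_cv_minus (a c : nat -> R) la lc : Un_cv (sum_f_R0 a) la -> Un_cv (sum_f_R0 c) lc ->
  Un_cv (sum_f_R0 (fun n => a n - c n)) (la - lc).
Proof.
  intros Ha Hc. apply (Un_cv_ext (fun n => sum_f_R0 a n - sum_f_R0 c n)).
  - intros n; rewrite minus_sum; reflexivity.
  - exact (CV_minus _ _ _ _ Ha Hc).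
Qed.

Lemma SP_derivable_pt_lim (fn fn' : nat -> R -> R) x :
  (forall n, derivable_pt_lim (fn n) x (fn' n x)) ->
  forall N, derivable_pt_lim (SP fn N) x (SP fn' N x).
Proof.
  intros Hfn N; induction N as [|N IH]; [apply Hfn|].
  exact (derivable_pt_lim_plus _ _ x _ _ IH (Hfn (Datatypes.S N))).
Qed.

Lemma SP_continuity_pt (fn : nat -> R -> R) x :
  (forall n, continuity_pt (fn n) x) -> forall N, continuity_pt (SP fn N) x.
Proof.
  intros Hfn N; induction N as [|N IH]; [apply Hfn|].
  exact (continuity_pt_plus _ _ x IH (Hfn (Datatypes.S N))).
Qed.

Section Periodic.

Variable f : R -> R.
Hypothesis f_periodic : forall x, f (x + 1) = f x.

Lemma periodic_shift_nat n x : f (x + INR n) = f x /\ f (x - INR n) = f x.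
Proof.
  revert x; induction n as [|n IH]; intros x.
  - simpl; split; f_equal; ring.
  - rewrite S_INR; destruct (IH x) as [Hp Hm]; split.
    + replace (x + (INR n + 1)) with ((x + INR n) + 1) by ring. rewrite f_periodic; auto.
    + rewrite <- Hm, <- (f_periodic (x - (INR n + 1))). f_equal; ring.
Qed.

Lemma periodic_shift_Z z x : f (x - IZR z) = f x.
Proof.
  destruct (Z.le_gt_cases 0 z).
  - rewrite <- (Z2Nat.id z), <- INR_IZR_INZ by assumption. apply periodic_shift_nat.
  - replace z with (- Z.of_nat (Z.to_nat (- z)))%Z by lia.
    rewrite opp_IZR, <- INR_IZR_INZ. unfold Rminus; rewrite Ropp_involutive.
    apply periodic_shift_nat.
Qed.

Lemma periodic_reduce x : f x = f (x - IZR (Int_part x)) /\ 0 <= x - IZR (Int_part x) < 1.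
Proof. split; [symmetry; apply periodic_shift_Z | pose proof (base_Int_part x); lra]. Qed.

Hypothesis f_cont : continuity f.

Lemma periodic_bounded : exists M, forall x, Rabs (f x) <= M.
Proof.
  destruct (continuity_ab_maj (fun x => Rabs (f x)) 0 1 ltac:(lra)) as [m [Hm _]].
  { intros c _. apply (continuity_pt_comp f Rabs); [apply f_cont | apply Rcontinuity_abs]. }
  exists (Rabs (f m)); intros x. destruct (periodic_reduce x) as [-> Hx]. apply Hm; lra.
Qed.

Lemma periodic_uniform_continuity eta : 0 < eta -> exists rho, 0 < rho /\
  forall x y, Rabs (x - y) < rho -> Rabs (f x - f y) < eta.
Proof.
  intros Heta.
  destruct (Heine f (fun c => -1 <= c <= 2) (compact_P3 (-1) 2)
    (fun x _ => f_cont x) (mkposreal eta Heta)) as [d Hd].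
  exists (Rmin d 1); split; [apply Rmin_pos; [apply cond_pos | lra]|].
  intros x y Hxy. set (z := Int_part x).
  rewrite <- (periodic_shift_Z z x), <- (periodic_shift_Z z y).
  pose proof (base_Int_part x); pose proof (Rmin_l d 1); pose proof (Rmin_r d 1).
  assert (Hy : Rabs (x - y) < 1) by lra. apply Rabs_def2 in Hy.
  apply (Hd (x - IZR z) (y - IZR z)); simpl; unfold z in *; try lra.
  replace (x - IZR (Int_part x) - (y - IZR (Int_part x))) with (x - y) by ring. lra.
Qed.

End Periodic.

Lemma derive_periodic (f df : R -> R) : (forall x, f (x + 1) = f x) ->
  (forall x, derivable_pt_lim f x (df x)) -> forall x, df (x + 1) = df x.
Proof.
  intros Hp Hd x.
  assert (Hshift : derivable_pt_lim (fun y => f (y + 1)) x (df (x + 1) * 1)).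
  { apply (derivable_pt_lim_comp (fun y => y + 1) f); [|apply Hd].
    pose proof (derivable_pt_lim_plus id (fct_cte 1) x 1 0
      (derivable_pt_lim_id x) (derivable_pt_lim_const 1 x)) as Hsum.
    rewrite Rplus_0_r in Hsum; exact Hsum. }
  rewrite Rmult_1_r in Hshift.
  apply (uniqueness_limite f x); [|apply Hd].
  replace f with (fun y => f (y + 1)) by (apply functional_extensionality; intros; apply Hp).
  exact Hshift.
Qed.

Lemma derivable_lipschitz (f df : R -> R) M : (forall x, derivable_pt_lim f x (df x)) ->
  (forall x, Rabs (df x) <= M) -> forall x y, Rabs (f x - f y) <= M * Rabs (x - y).
Proof.
  intros Hd HM x y. destruct (MVT_abs f df y x (fun c _ => Hd c)) as [c [-> _]].
  apply Rmult_le_compat_r; [apply Rabs_pos | apply HM].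
Qed.

Definition digit_map (b : nat) (i : nat -> nat) (n : nat) (x : R) : R :=
  (x + digval b i (Datatypes.S n)) / INR b ^ Datatypes.S n.

Definition Sterm_deriv (b : nat) (gamma : R) (dpsi : R -> R) (i : nat -> nat)
  (n : nat) (x : R) : R :=
  gamma ^ n / INR b ^ Datatypes.S n * dpsi (digit_map b i n x).

Lemma affine_derivable_pt_lim c D x : derivable_pt_lim (fun y => (y + c) / D) x (/ D).
Proof.
  replace (fun y => (y + c) / D) with (mult_real_fct (/ D) (id + fct_cte c)%F)
    by (apply functional_extensionality; intros y;
        unfold mult_real_fct, plus_fct, id, fct_cte, Rdiv; ring).
  replace (/ D) with (/ D * (1 + 0)) at 2 by ring.
  apply derivable_pt_lim_scal, derivable_pt_lim_plus;
    [apply derivable_pt_lim_id | apply derivable_pt_lim_const].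
Qed.

Lemma pow_INR_ge1 b n : (2 <= b)%nat -> 1 <= INR b ^ n.
Proof. intros Hb. apply pow_R1_Rle. apply le_INR in Hb. simpl in Hb. lra. Qed.

Lemma inv_pow_INR_range b n : (2 <= b)%nat -> 0 < / INR b ^ n <= 1.
Proof.
  intros Hb; pose proof (pow_INR_ge1 b n Hb).
  split; [apply Rinv_0_lt_compat; lra | rewrite <- Rinv_1; apply Rinv_le_contravar; lra].
Qed.

Lemma digit_map_contract b i n x y : (2 <= b)%nat ->
  Rabs (digit_map b i n x - digit_map b i n y) <= Rabs (x - y).
Proof.
  intros Hb; unfold digit_map.
  pose proof (inv_pow_INR_range b (Datatypes.S n) Hb) as Hinv.
  replace ((x + digval b i (Datatypes.S n)) / INR b ^ Datatypes.S n -
           (y + digval b i (Datatypes.S n)) / INR b ^ Datatypes.S n)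
    with ((x - y) * / INR b ^ Datatypes.S n) by (unfold Rdiv; ring).
  rewrite Rabs_mult, (Rabs_right (/ _)) by lra.
  pose proof (Rabs_pos (x - y)); nra.
Qed.

Definition S_S'_equicontinuous (b : nat) (gamma : R) (psi : R -> R) : Prop :=
  forall eta, 0 < eta -> exists rho, 0 < rho /\
    forall x y i, Rabs (x - y) < rho ->
      Rabs (S b gamma psi x i - S b gamma psi y i) <= eta /\
      Rabs (S' b gamma psi x i - S' b gamma psi y i) <= eta.

Section Series.

Variables (b : nat) (gamma : R) (psi dpsi : R -> R) (M : R).
Hypothesis b_ge2 : (2 <= b)%nat.
Hypothesis gamma_range : 0 < gamma < 1.
Hypothesis psi_bound : forall x, Rabs (psi x) <= M.
Hypothesis dpsi_bound : forall x, Rabs (dpsi x) <= M.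
Hypothesis psi_deriv : forall x, derivable_pt_lim psi x (dpsi x).
Hypothesis dpsi_cont : continuity dpsi.

Lemma Sterm_bound x i n : Rabs (Sterm b gamma psi x i n) <= M * gamma ^ n.
Proof.
  unfold Sterm; rewrite Rabs_mult, Rabs_right, Rmult_comm by (apply Rle_ge, pow_le; lra).
  apply Rmult_le_compat_r; [apply pow_le; lra | apply psi_bound].
Qed.

Lemma Sterm_deriv_bound x i n : Rabs (Sterm_deriv b gamma dpsi i n x) <= M * gamma ^ n.
Proof.
  unfold Sterm_deriv, Rdiv. pose proof (inv_pow_INR_range b (Datatypes.S n) b_ge2).
  assert (Hpow : 0 < gamma ^ n) by (apply pow_lt; lra).
  rewrite Rabs_mult, Rabs_right by (apply Rle_ge, Rmult_le_pos; lra).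
  specialize (dpsi_bound (digit_map b i n x)).
  pose proof (Rabs_pos (dpsi (digit_map b i n x))).
  apply Rle_trans with (gamma ^ n * Rabs (dpsi (digit_map b i n x))); [|nra].
  apply Rmult_le_compat_r; nra.
Qed.

Lemma Sterm_derivable x i n :
  derivable_pt_lim (fun y => Sterm b gamma psi y i n) x (Sterm_deriv b gamma dpsi i n x).
Proof.
  pose proof (derivable_pt_lim_comp _ psi x _ _
    (affine_derivable_pt_lim (digval b i (Datatypes.S n)) (INR b ^ Datatypes.S n) x)
    (psi_deriv _)) as Hcomp.
  unfold Sterm_deriv, Rdiv; rewrite Rmult_assoc, Rmult_comm with (r1 := / _).
  exact (derivable_pt_lim_scal _ (gamma ^ n) x _ Hcomp).
Qed.

Lemma Sterm_deriv_continuity i n : continuity (Sterm_deriv b gamma dpsi i n).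
Proof.
  intros x; apply (continuity_pt_scal (comp dpsi (digit_map b i n))).
  apply continuity_pt_comp; [|apply dpsi_cont].
  apply derivable_continuous_pt; eexists; apply affine_derivable_pt_lim.
Qed.

Lemma S_series x i : Un_cv (sum_f_R0 (Sterm b gamma psi x i)) (S b gamma psi x i).
Proof.
  destruct (CVN_R_CVS (fun n y => Sterm b gamma psi y i n)
    (fun r => CVN_r_geometric gamma M _ r gamma_range (fun n y => Sterm_bound y i n)) x)
    as [l Hl].
  apply (epsilon_spec (inhabits 0) (fun s => infinite_sum (Sterm b gamma psi x i) s)).
  exists l; exact Hl.
Qed.

(* Termwise differentiation, justified by the normal convergence of the derived series. *)
Lemma S'_series x i :
  Un_cv (sum_f_R0 (fun n => Sterm_deriv b gamma dpsi i n x)) (S' b gamma psi x i).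
Proof.
  set (fn' := fun n => Sterm_deriv b gamma dpsi i n).
  set (r := mkposreal (Rabs x + 1) ltac:(pose proof (Rabs_pos x); lra)).
  assert (Hnormal : forall r' : posreal, CVN_r fn' r')
    by (intros r'; exact (CVN_r_geometric gamma M _ r' gamma_range
          (fun n y => Sterm_deriv_bound y i n))).
  set (cv := CVN_R_CVS fn' Hnormal).
  assert (Hunif := CVN_CVU fn' cv r (Hnormal r)).
  assert (Hx : Boule 0 r x) by (unfold Boule; simpl; rewrite Rminus_0_r; lra).
  assert (Hderiv := derivable_pt_lim_CVU
    (fun N => SP (fun n y => Sterm b gamma psi y i n) N) (SP fn')
    (fun y => S b gamma psi y i) (SFL fn' cv) x 0 r Hx
    (fun y N _ => SP_derivable_pt_lim _ fn' y (fun n => Sterm_derivable y i n) N)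
    (fun y _ => S_series y i) Hunif
    (CVU_continuity _ _ 0 r Hunif
       (fun n y _ => SP_continuity_pt fn' y (fun k => Sterm_deriv_continuity i k y) n))).
  replace (S' b gamma psi x i) with (SFL fn' cv x).
  - unfold SFL; destruct (cv x) as [l Hl]; exact Hl.
  - apply (uniqueness_limite _ x _ _ Hderiv).
    apply (epsilon_spec (inhabits 0)
      (fun d => derivable_pt_lim (fun y => S b gamma psi y i) x d)); eauto.
Qed.

Lemma S_lipschitz x y i :
  Rabs (S b gamma psi x i - S b gamma psi y i) <= M / (1 - gamma) * Rabs (x - y).
Proof.
  replace (M / (1 - gamma) * Rabs (x - y)) with (M * Rabs (x - y) / (1 - gamma))
    by (field; lra).
  eapply (series_le_geometric gamma _ _ _ gamma_range); [|
    exact (series_cv_minus _ _ _ _ (S_series x i) (S_series y i))].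
  intros n; unfold Sterm; rewrite <- Rmult_minus_distr_l, Rabs_mult, Rabs_right,
    Rmult_comm by (apply Rle_ge, pow_le; lra).
  apply Rmult_le_compat_r; [apply pow_le; lra|].
  eapply Rle_trans; [apply (derivable_lipschitz psi dpsi M psi_deriv dpsi_bound)|].
  apply Rmult_le_compat_l; [| apply digit_map_contract; exact b_ge2].
  pose proof (Rabs_pos (psi 0)); specialize (psi_bound 0); lra.
Qed.

Hypothesis dpsi_periodic : forall x, dpsi (x + 1) = dpsi x.

Lemma S'_equicontinuous eta : 0 < eta -> exists rho, 0 < rho /\
  forall x y i, Rabs (x - y) < rho -> Rabs (S' b gamma psi x i - S' b gamma psi y i) <= eta.
Proof.
  intros Heta.
  destruct (periodic_uniform_continuity dpsi dpsi_periodic dpsi_cont (eta * (1 - gamma)))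
    as [rho [Hrho Hunif]]; [nra|].
  exists rho; split; [exact Hrho|]. intros x y i Hxy.
  replace eta with (eta * (1 - gamma) / (1 - gamma)) by (field; lra).
  eapply (series_le_geometric gamma _ _ _ gamma_range); [|
    exact (series_cv_minus _ _ _ _ (S'_series x i) (S'_series y i))].
  intros n; unfold Sterm_deriv, Rdiv.
  pose proof (inv_pow_INR_range b (Datatypes.S n) b_ge2).
  assert (Hpow : 0 < gamma ^ n) by (apply pow_lt; lra).
  rewrite <- Rmult_minus_distr_l, Rabs_mult, Rabs_right by (apply Rle_ge, Rmult_le_pos; lra).
  assert (Hd := Hunif (digit_map b i n x) (digit_map b i n y)
    ltac:(pose proof (digit_map_contract b i n x y b_ge2); lra)).
  pose proof (Rabs_pos (dpsi (digit_map b i n x) - dpsi (digit_map b i n y))).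
  rewrite (Rmult_comm (eta * _)). apply Rmult_le_compat; nra.
Qed.

Lemma S_S'_equicontinuous_bounded : S_S'_equicontinuous b gamma psi.
Proof.
  intros eta Heta.
  assert (HM : 0 <= M) by (pose proof (Rabs_pos (psi 0)); specialize (psi_bound 0); lra).
  destruct (S'_equicontinuous eta Heta) as [rho [Hrho Hclose]].
  set (rho' := eta * (1 - gamma) / (M + 1)).
  assert (Hrho' : 0 < rho') by (apply Rdiv_lt_0_compat; nra).
  exists (Rmin rho rho'); split; [apply Rmin_pos; auto|].
  intros x y i Hxy. pose proof (Rmin_l rho rho'); pose proof (Rmin_r rho rho').
  split; [|apply Hclose; lra].
  eapply Rle_trans; [apply S_lipschitz|].
  apply Rle_trans with (M / (1 - gamma) * rho').
  - apply Rmult_le_compat_l; [apply Rle_mult_inv_pos|]; lra.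
  - unfold rho'; replace (M / (1 - gamma) * (eta * (1 - gamma) / (M + 1)))
      with (eta * (M / (M + 1))) by (field; lra).
    assert (M / (M + 1) <= 1)
      by (apply Rmult_le_reg_r with (M + 1); [lra|]; field_simplify; lra).
    nra.
Qed.

End Series.

Lemma S_S'_equicontinuous_C1_periodic b gamma psi : (2 <= b)%nat -> 0 < gamma < 1 ->
  (forall x, psi (x + 1) = psi x) ->
  (exists dpsi, (forall x, derivable_pt_lim psi x (dpsi x)) /\ continuity dpsi) ->
  S_S'_equicontinuous b gamma psi.
Proof.
  intros Hb Hg Hper [dpsi [Hd Hc]].
  assert (Hdper := derive_periodic psi dpsi Hper Hd).
  destruct (periodic_bounded psi Hper) as [M1 HM1].
  { intros x; apply derivable_continuous_pt; exists (dpsi x); apply Hd. }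
  destruct (periodic_bounded dpsi Hdper Hc) as [M2 HM2].
  apply (S_S'_equicontinuous_bounded b gamma psi dpsi (Rmax M1 M2)); auto.
  - intros x; specialize (HM1 x); pose proof (Rmax_l M1 M2); lra.
  - intros x; specialize (HM2 x); pose proof (Rmax_r M1 M2); lra.
Qed.

Lemma borel_empty : borel (fun _ => False).
Proof.
  apply (borel_ext (fun x => 0 < x < 0)); [intros; lra | apply borel_interval].
Qed.

Lemma borel_const (P : Prop) : borel (fun _ => P).
Proof.
  destruct (classic P) as [HP|HnP].
  - apply (borel_ext (fun _ => ~ False)); [tauto | apply borel_compl, borel_empty].
  - apply (borel_ext (fun _ => False)); [tauto | apply borel_empty].
Qed.

Lemma borel_or A B : borel A -> borel B -> borel (fun x => A x \/ B x).
Proof.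
  intros HA HB.
  apply (borel_ext (fun x => exists n, (match n with O => A | _ => B end) x)).
  - intros x; split; [intros [[|n] H]; auto | intros [H|H]; [exists O | exists 1%nat]; auto].
  - apply borel_union; intros [|n]; auto.
Qed.

Lemma borel_and A B : borel A -> borel B -> borel (fun x => A x /\ B x).
Proof.
  intros HA HB. apply (borel_ext (fun x => ~ (~ A x \/ ~ B x))).
  - intros x; split; [intros H; split; apply NNPP; tauto | tauto].
  - apply borel_compl, borel_or; apply borel_compl; auto.
Qed.

Lemma borel_Ico01 : borel (fun x => 0 <= x < 1).
Proof.
  apply (borel_ext (fun x => (-1 < x < 1) /\ ~ (-1 < x < 0))).
  - intros x; split; intros H; [destruct H; lra | split; lra].
  - apply borel_and; [apply borel_interval | apply borel_compl, borel_interval].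
Qed.

Lemma measurable01_const c : measurable01 (fun _ => c).
Proof. intros B HB. apply borel_and; [apply borel_Ico01 | apply borel_const]. Qed.

Lemma measurable01_if (P : R -> Prop) c1 c0 : borel P ->
  measurable01 (fun x => if excluded_middle_informative (P x) then c1 else c0).
Proof.
  intros HP B HB.
  apply (borel_ext (fun x => 0 <= x < 1 /\ ((P x /\ B c1) \/ (~ P x /\ B c0)))).
  - intros x; destruct (excluded_middle_informative (P x)); tauto.
  - apply borel_and; [apply borel_Ico01|].
    apply borel_or; apply borel_and; auto using borel_const, borel_compl.
Qed.

Lemma Rabs_diff_perturb a c a' c' t e : Rabs (a - c) <= t ->
  Rabs (a - a') <= e -> Rabs (c - c') <= e -> Rabs (a' - c') <= t + 2 * e.
Proof. intros. unfold Rabs in *. repeat destruct Rcase_abs; lra. Qed.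

Lemma inE_perturb b gamma psi q eps delta eps' delta' e x y u v :
  (forall k, Rabs (S b gamma psi x k - S b gamma psi y k) <= e /\
             Rabs (S' b gamma psi x k - S' b gamma psi y k) <= e) ->
  eps + 2 * e <= eps' -> delta + 2 * e <= delta' ->
  inE b gamma psi q x eps delta u v -> inE b gamma psi q y eps' delta' u v.
Proof.
  intros Hxy Heps Hdelta [Hu [Hv [i [j [Hi [Hj [HS HS']]]]]]].
  split; [auto | split; [auto|]]. exists i, j; split; [auto | split; [auto|]].
  destruct (Hxy (Defs.concat u i)) as [Hui Hui'], (Hxy (Defs.concat v j)) as [Hvj Hvj'].
  split; eapply Rle_trans.
  - exact (Rabs_diff_perturb _ _ _ _ _ _ HS Hui Hvj).
  - lra.
  - exact (Rabs_diff_perturb _ _ _ _ _ _ HS' Hui' Hvj').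
  - lra.
Qed.

Lemma inE_sym b gamma psi q eps delta x u v :
  inE b gamma psi q x eps delta u v -> inE b gamma psi q x eps delta v u.
Proof.
  intros [Hu [Hv [i [j [Hi [Hj [HS HS']]]]]]]. split; [auto | split; [auto|]].
  exists j, i; repeat split; auto; rewrite Rabs_minus_sym; auto.
Qed.

Lemma grid_cover rho x : 0 < rho -> 0 <= x -> exists n : nat,
  INR n * (rho / 2) - rho < x < INR n * (rho / 2) + rho.
Proof.
  intros Hrho Hx. set (t := x / (rho / 2)).
  assert (Ht : 0 <= t) by (apply Rle_mult_inv_pos; lra).
  pose proof (base_Int_part t) as [Hlo Hhi].
  assert (Hz : (0 <= Int_part t)%Z) by (apply Z.lt_succ_r, lt_IZR; rewrite succ_IZR; lra).
  exists (Z.to_nat (Int_part t)); rewrite INR_IZR_INZ, Z2Nat.id by exact Hz.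
  assert (x = t * (rho / 2)) by (unfold t; field; lra).
  split; nra.
Qed.

(* The set of [x] at which [(u,v)] is in [E] need not be Borel; [G u v] is a countable union
   of intervals sandwiched between two such sets. *)
Lemma inE_borel_sandwich b gamma psi q eps delta :
  S_S'_equicontinuous b gamma psi -> 0 < eps -> 0 < delta ->
  exists G : list nat -> list nat -> R -> Prop,
    (forall u v, borel (G u v)) /\
    (forall u v x, 0 <= x -> inE b gamma psi q x (eps / 2) (delta / 2) u v -> G u v x) /\
    (forall u v x, G u v x -> inE b gamma psi q x eps delta u v).
Proof.
  intros Hequi Heps Hdelta.
  set (e := Rmin eps delta / 8).
  assert (He : 0 < e) by (unfold e; apply Rmin_case; lra).
  assert (He1 : e <= eps / 8) by (unfold e; pose proof (Rmin_l eps delta); lra).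
  assert (He2 : e <= delta / 8) by (unfold e; pose proof (Rmin_r eps delta); lra).
  destruct (Hequi e He) as [rho [Hrho Hclose]].
  exists (fun u v x => exists n : nat,
    inE b gamma psi q (INR n * (rho / 2)) (3 * eps / 4) (3 * delta / 4) u v /\
    INR n * (rho / 2) - rho < x < INR n * (rho / 2) + rho).
  split; [|split].
  - intros u v; apply borel_union; intros n.
    apply borel_and; [apply borel_const | apply borel_interval].
  - intros u v x Hx HE. destruct (grid_cover rho x Hrho Hx) as [n Hn].
    exists n; split; [|exact Hn].
    apply (inE_perturb b gamma psi q (eps / 2) (delta / 2) _ _ e x); [|lra|lra|exact HE].
    intros k; apply Hclose, Rabs_def1; lra.
  - intros u v x [n [HE Hn]].
    apply (inE_perturb b gamma psi q (3 * eps / 4) (3 * delta / 4) _ _ e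
      (INR n * (rho / 2))); [|lra|lra|exact HE].
    intros k; apply Hclose, Rabs_def1; lra.
Qed.

Lemma fold_Rmax_le {A} (f : A -> R) l c : 0 <= c -> (forall a, In a l -> f a <= c) ->
  fold_right Rmax 0 (map f l) <= c.
Proof. intros Hc; induction l; simpl; intros H; [exact Hc | apply Rmax_lub; auto]. Qed.

Lemma fold_Rplus_le {A} (f g : A -> R) l : (forall a, In a l -> f a <= g a) ->
  fold_right Rplus 0 (map f l) <= fold_right Rplus 0 (map g l).
Proof. induction l; simpl; intros H; [lra | apply Rplus_le_compat; auto]. Qed.

Lemma fold_Rplus_indicator {A} (p : A -> bool) l :
  fold_right Rplus 0 (map (fun a => if p a then 1 else 0) l) = INR (length (filter p l)).
Proof.
  induction l; simpl; [reflexivity|]. rewrite IHl.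
  destruct (p a); simpl length; [rewrite S_INR|]; lra.
Qed.

Lemma fold_Rplus_count_occ {A} (dec : forall a a' : A, {a = a'} + {a <> a'}) u l :
  fold_right Rplus 0 (map (fun v => if dec v u then 1 else 0) l) = INR (count_occ dec l u).
Proof.
  induction l as [|a l IH]; simpl; [reflexivity|]. rewrite IH.
  destruct (dec a u); [rewrite S_INR|]; lra.
Qed.

Lemma fold_Nat_max_ge {A} (f : A -> nat) l a : In a l ->
  (f a <= fold_right Nat.max 0 (map f l))%nat.
Proof.
  induction l as [|a' l IH]; simpl; intros H; [contradiction|].
  destruct H as [<-|H]; [lia | specialize (IH H); lia].
Qed.

Lemma NoDup_words b q : NoDup (words b q).
Proof.
  induction q as [|q IH]; simpl; [constructor; [simpl; tauto | constructor]|].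
  pose proof (seq_NoDup b 0) as Hseq; revert Hseq; generalize (seq 0 b).
  intros l Hl; induction Hl as [|d l Hd Hl IHl]; simpl; [constructor|].
  apply NoDup_app; auto.
  - apply NoDup_map_NoDup_ForallPairs; auto. intros x y _ _ E; inversion E; auto.
  - intros w Hw1 Hw2. apply in_map_iff in Hw1 as [w1 [<- _]].
    apply in_flat_map in Hw2 as [d' [Hd' Hw]]. apply in_map_iff in Hw as [w2 [E _]].
    inversion E; subst; contradiction.
Qed.

Lemma bool_of_true (P : Prop) : P -> bool_of P = true.
Proof. intros H; unfold bool_of; destruct excluded_middle_informative; tauto. Qed.

Lemma inE_refl b gamma psi q eps delta x u : (0 < b)%nat -> 0 <= eps -> 0 <= delta ->
  In u (words b q) -> inE b gamma psi q x eps delta u u.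
Proof.
  intros Hb Heps Hdelta Hu. split; [auto | split; [auto|]].
  exists (fun _ => O), (fun _ => O).
  repeat split; try (intros n; exact Hb); rewrite Rminus_diag, Rabs_R0; auto.
Qed.

Lemma fold_Rplus_le_e b gamma psi q x eps delta k (f : list nat -> R) : In k (words b q) ->
  (forall l, In l (words b q) ->
     f l <= if bool_of (inE b gamma psi q x eps delta k l) then 1 else 0) ->
  fold_right Rplus 0 (map f (words b q)) <= INR (e b gamma psi q x eps delta).
Proof.
  intros Hk Hf. eapply Rle_trans; [apply fold_Rplus_le; exact Hf|].
  rewrite fold_Rplus_indicator. apply le_INR; unfold e.
  exact (fold_Nat_max_ge (fun k => length (filter (fun l =>
    bool_of (inE b gamma psi q x eps delta k l)) (words b q))) _ k Hk).
Qed.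

Lemma esssup_le_of_le (f : R -> R) c c' : (forall x, 0 <= x < 1 -> f x <= c) -> c < c' ->
  esssup_le f c'.
Proof.
  intros Hf Hc eta Heta. exists (fun _ => 0), (fun _ => 0). split; [intros; lra|split].
  - intros x [Hx Hlt]. specialize (Hf x Hx); lra.
  - intros N; induction N; simpl; lra.
Qed.

Definition K_weight (K : R -> Prop) (x : R) : R :=
  if excluded_middle_informative (K x) then sqrt 2 else 1.

Definition pair_indicator (G : list nat -> list nat -> R -> Prop) (x : R) (u v : list nat) : R :=
  if list_eq_dec Nat.eq_dec u v then 1 else
  if excluded_middle_informative (G u v x) then 1 else 0.

Lemma sqrt2_ge1 : 1 <= sqrt 2.
Proof. rewrite <- sqrt_1; apply sqrt_le_1_alt; lra. Qed.

Lemma K_weight_weight K : borel K -> weight (K_weight K).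
Proof.
  intros HK. pose proof sqrt2_ge1.
  split; [apply measurable01_if; exact HK | split].
  - intros x _; unfold K_weight; destruct excluded_middle_informative; lra.
  - exists (sqrt 2); intros x _; unfold K_weight.
    destruct excluded_middle_informative; split; unfold Rdiv; rewrite ?Rmult_1_l; try lra.
    + apply Rle_trans with 1; [|lra]. rewrite <- Rinv_1; apply Rinv_le_contravar; lra.

Qed.

Lemma pair_indicator_admissible b gamma psi q eps delta G :
  (forall u v, borel (G u v)) ->
  (forall u v x, 0 <= x -> inE b gamma psi q x eps delta u v -> G u v x) ->
  0 < eps -> 0 < delta -> admissible b gamma psi q (pair_indicator G).
Proof.
  intros HG HEG Heps Hdelta. unfold pair_indicator. split; [|split].
  - intros u v _ _. destruct list_eq_dec; [apply measurable01_const | apply measurable01_if, HG].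
  - intros x u v _ _ _. destruct list_eq_dec; [lra | destruct excluded_middle_informative; lra].
  - exists eps, delta; split; [exact Heps | split; [exact Hdelta|]].
    intros x u v Hx HE.
    destruct (list_eq_dec Nat.eq_dec u v) as [->|Huv]; [destruct list_eq_dec; [lra | tauto]|].
    destruct (list_eq_dec Nat.eq_dec v u) as [->|Hvu]; [tauto|].
    destruct excluded_middle_informative as [|HnG]; [|exfalso; apply HnG, HEG; [lra | exact HE]].
    destruct excluded_middle_informative as [|HnG]; [lra|].
    exfalso; apply HnG, HEG; [lra | apply inE_sym, HE].
Qed.

Section SigmaBound.

Variables (b : nat) (gamma : R) (psi : R -> R) (q : nat) (eps delta : R).
Variables (K : R -> Prop) (G : list nat -> list nat -> R -> Prop).
Hypothesis b_pos : (0 < b)%nat.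
Hypotheses (eps_pos : 0 < eps) (delta_pos : 0 < delta).
Hypothesis G_inE : forall u v x, G u v x -> inE b gamma psi q x eps delta u v.
Hypothesis e_K : forall x, 0 <= x < 1 -> K x -> e b gamma psi q x eps delta = 1%nat.
Hypothesis e_notK : forall x, 0 <= x < 1 -> ~ K x -> (e b gamma psi q x eps delta <= 2)%nat.
Hypothesis E_notK_into_K : forall x u v, 0 <= x < 1 -> ~ K x ->
  inE b gamma psi q x eps delta u v -> u <> v -> K (xw b x u) /\ K (xw b x v).

Let Vsum x u := fold_right Rplus 0 (map (fun v => pair_indicator G x u v) (words b q)).

Lemma pair_indicator_sum_le_e x u : In u (words b q) ->
  Vsum x u <= INR (e b gamma psi q x eps delta).
Proof.
  intros Hu. apply fold_Rplus_le_e with (k := u); [exact Hu|]. intros v Hv; unfold pair_indicator.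
  destruct list_eq_dec as [<-|].
  - rewrite bool_of_true; [lra | apply inE_refl; auto; lra].
  - destruct excluded_middle_informative as [HG|]; [|destruct bool_of; lra].
    rewrite bool_of_true; [lra | apply G_inE, HG].
Qed.

Lemma pair_indicator_sum_le_1 x u : (forall v, u <> v -> ~ G u v x) -> Vsum x u <= 1.
Proof.
  intros HnG. eapply Rle_trans.
  - apply (fold_Rplus_le _ (fun v => if list_eq_dec Nat.eq_dec v u then 1 else 0)).
    intros v _; unfold pair_indicator.
    destruct (list_eq_dec Nat.eq_dec u v) as [->|Huv]; [destruct list_eq_dec; [lra | tauto]|].
    destruct excluded_middle_informative as [HG|]; [destruct (HnG v Huv HG)|].
    destruct list_eq_dec; lra.
  - rewrite fold_Rplus_count_occ.
    pose proof (proj1 (NoDup_count_occ (list_eq_dec Nat.eq_dec) _) (NoDup_words b q) u) as Hcount.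
    apply le_INR in Hcount; simpl in Hcount; lra.
Qed.

Lemma Sigma_K_weight_le_sqrt2 x : 0 <= x < 1 ->
  Sigma b q (pair_indicator G) (K_weight K) x <= sqrt 2.
Proof.
  intros Hx. pose proof sqrt2_ge1 as Hs1. pose proof (sqrt_sqrt 2 ltac:(lra)) as Hs2.
  apply fold_Rmax_le; [lra|]. intros u Hu. fold (Vsum x u).
  pose proof (pair_indicator_sum_le_e x u Hu) as He.
  unfold K_weight at 1; destruct excluded_middle_informative as [Kx|nKx].
  - rewrite (e_K x Hx Kx) in He; simpl in He.
    assert (Hw : 1 <= K_weight K (xw b x u))
      by (unfold K_weight; destruct excluded_middle_informative; lra).
    apply Rle_trans with (sqrt 2 / K_weight K (xw b x u) * 1).
    + apply Rmult_le_compat_l; [apply Rle_mult_inv_pos|]; lra.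
    + unfold Rdiv; rewrite Rmult_1_r; rewrite <- (Rmult_1_r (sqrt 2)) at 2.
      apply Rmult_le_compat_l; [lra|]. rewrite <- Rinv_1; apply Rinv_le_contravar; lra.
  - unfold K_weight; destruct excluded_middle_informative as [Ku|nKu].
    + pose proof (e_notK x Hx nKx) as He2; apply le_INR in He2; simpl in He2.
      apply Rle_trans with (1 / sqrt 2 * 2).
      * apply Rmult_le_compat_l; [apply Rle_mult_inv_pos|]; lra.
      * right; rewrite <- Hs2 at 2; field; lra.
    + assert (Vsum x u <= 1); [|unfold Rdiv; rewrite Rinv_1; lra].
      apply pair_indicator_sum_le_1. intros v Huv HG.
      exact (nKu (proj1 (E_notK_into_K x u v Hx nKx (G_inE _ _ _ HG) Huv))).
Qed.

End SigmaBound.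

Theorem lemma2p10 (b : nat) (gamma : R) (psi : R -> R)
  (Hb : (2 <= b)%nat) (Hgamma : 1 / INR b < gamma < 1)
  (Hper : forall x, psi (x + 1) = psi x)
  (HC1 : exists dpsi : R -> R,
      (forall x, derivable_pt_lim psi x (dpsi x)) /\ continuity dpsi)
  (q : nat) (Hq : (1 <= q)%nat)
  (eps delta : R) (K : R -> Prop)
  (Heps : 0 < eps) (Hdelta : 0 < delta)
  (HK : borel K) (HK01 : forall x, K x -> 0 <= x < 1)
  (Hi1 : forall x, 0 <= x < 1 -> K x -> e b gamma psi q x eps delta = 1%nat)
  (Hi2 : forall x, 0 <= x < 1 -> ~ K x -> (e b gamma psi q x eps delta <= 2)%nat)
  (Hii : forall x u v, 0 <= x < 1 -> ~ K x ->
      inE b gamma psi q x eps delta u v -> u <> v ->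
      K (xw b x u) /\ K (xw b x v)) :
  sigma_le b gamma psi q (sqrt 2).
Proof.
  assert (Hg : 0 < gamma < 1).
  { split; [|lra]. apply Rlt_trans with (1 / INR b); [|lra].
    apply Rdiv_lt_0_compat; [lra | apply lt_0_INR; lia]. }
  destruct (inE_borel_sandwich b gamma psi q eps delta
    (S_S'_equicontinuous_C1_periodic b gamma psi Hb Hg Hper HC1) Heps Hdelta)
    as [G [HG [HEG HGE]]].
  intros eta Heta. exists (K_weight K), (pair_indicator G). split; [|split].
  - exact (K_weight_weight K HK).
  - apply (pair_indicator_admissible b gamma psi q (eps / 2) (delta / 2)); auto; lra.
  - apply esssup_le_of_le with (sqrt 2); [|lra].
    apply (Sigma_K_weight_le_sqrt2 b gamma psi q eps delta); auto; lia.
Qed.
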